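(* Let $d\ge3$, let $G$ be a $d$-map and let $\mathcal{L}$ be a $d$-GS labeling of $G$. For every inner edge $e$ of $G$, if $c_1,c_2,c_3,c_4$ are the four corners incident to $e$ listed in counterclockwise order around $e$, then the sum of the label jumps from $c_1$ to $c_2$, $c_2$ to $c_3$, $c_3$ to $c_4$ and $c_4$ to $c_1$ equals $d$.
   Context: A plane map is a connected graph (loops, multiple edges allowed) embedded in the plane without crossings, up to deformation; outer (unbounded) face, inner faces; outer vertices/edges lie on the outer face. A corner is the sector between consecutive half-edges around a vertex, inner if in an inner face; $\deg(f)$ = number of corners of face $f$. For $d\ge3$, a $d$-map has inner faces of degree $\le d$ and outer face of degree $d$ bounded by a simple cycle, with outer vertices $v_1,\dots,v_d$ in clockwise order. The four corners incident to an edge $e=\{u,v\}$ are the corners at $u$ and at $v$ on each side of $e$; they are ordered by turning counterclockwise around a small neighborhood of $e$. Label jump from $i$ to $i'$ in $[d]$: the $\delta\in\{0,\dots,d-1\}$ with $i+\delta\equiv i'\pmod d$. A $d$-GS labeling labels each inner corner in $[d]$ with (L0) corners at $v_i$ labeled $i$; (L1) around every inner vertex and every inner face, the jumps between consecutive corners in clockwise order sum to $d$; (L2) consecutive corners around an inner face have distinct labels; (L3) for each inner edge $e$ and incident face $f$, with $c,c'$ the corners of $f$ at $e$ ($c'$ following $c$ clockwise around $f$), $v$ the vertex of $c'$, $\delta$ the jump $c\to c'$ and $\epsilon$ the jump from $c'$ to the next corner clockwise around $v$ (outer corner at $v_i$ considered labeled $i$): $\delta+\epsilon>d-\deg(f)$.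 *)

From mathcomp Require Import all_boot.
Set Implicit Arguments. Unset Strict Implicit. Unset Printing Implicit Defensive.

(* Conventions:
   - D : finite set of darts (half-edges); a dart h is identified with the
     corner lying between h and sigma h (counterclockwise next dart at its vertex).
   - alpha : fixed-point-free involution (other half of the edge).
   - sigma : permutation, counterclockwise rotation around each vertex;
     vertices = sigma-orbits.
   - fphi h := sigma^-1 (alpha h): next corner counterclockwise around the face
     (face on the left); faces = fphi-orbits; fphi^-1 g = alpha (sigma g) is the
     next corner clockwise around the face.
   - The outer face is the fphi-orbit of a root dart r; v_(k+1) is the vertex of
     the corner iter k fphi r (this enumerates outer vertices clockwise). *)

Section Maps.
Variables (D : finType) (alpha sigma : D -> D).

Definition fphi (h : D) : D := finv sigma (alpha h).
Definition fphi_inv (h : D) : D := alpha (sigma h).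

Definition map_rel : rel D := fun a b => (b == sigma a) || (b == alpha a).

(* connected, genus-0 (Euler's formula V - E + F = 2) combinatorial map *)
Definition is_plane_map : Prop :=
  [/\ injective sigma,
      (forall h, alpha (alpha h) = h),
      (forall h, alpha h != h),
      (forall x y, connect map_rel x y) &
      fcard sigma D + fcard fphi D = #|D| %/ 2 + 2].

Variable r : D. (* root dart: its corner is the outer corner at v_1 *)

Definition outer_corner (h : D) : bool := fconnect fphi r h.
Definition face_deg (h : D) : nat := order fphi h.

Definition is_d_map (d : nat) : Prop :=
  [/\ is_plane_map,
      face_deg r = d,
      (* outer face bounded by a simple cycle: its d corners are at distinct vertices *)
      (forall i j, i < j < d -> ~~ fconnect sigma (iter i fphi r) (iter j fphi r)) &
      (forall h, ~~ outer_corner h -> face_deg h <= d)].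

Definition inner_edge (h : D) : bool := ~~ outer_corner h && ~~ outer_corner (alpha h).

Definition jump (d i i' : nat) : nat := (i' + d - i) %% d.

(* label of a corner, outer corner at v_i considered labelled i *)
Definition ext_label (d : nat) (L : D -> nat) (g : D) : nat :=
  if outer_corner g then (find (fun k => iter k fphi r == g) (iota 0 d)).+1
  else L g.

Definition is_GS_labeling (d : nat) (L : D -> nat) : Prop :=
      (forall h, ~~ outer_corner h -> 0 < L h <= d) /\
      (forall h k, ~~ outer_corner h -> k < d ->
          fconnect sigma (iter k fphi r) h -> L h = k.+1) /\
      (* L1 for inner vertices (clockwise = sigma^-1) *)
      (forall v, (forall g, fconnect sigma v g -> ~~ outer_corner g) ->
          \sum_(g | fconnect sigma v g) jump d (L g) (L (finv sigma g)) = d) /\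
      (* L1 for inner faces (clockwise = fphi_inv) *)
      (forall h, ~~ outer_corner h ->
          \sum_(g | fconnect fphi h g) jump d (L g) (L (fphi_inv g)) = d) /\
      (forall g, ~~ outer_corner g -> L g != L (fphi_inv g)) /\
      (* L3: face f on the left of h; c = fphi h, c' = h, v = tail of h *)
      (forall h, inner_edge h ->
          d - face_deg h <
          jump d (L (fphi h)) (L h) + jump d (L h) (ext_label d L (finv sigma h))).

End Maps.

From mathcomp Require Import all_boot zify.

Set Implicit Arguments.
Unset Strict Implicit.
Unset Printing Implicit Defensive.

(* Write S(h) for the sum of the four label jumps around the edge of the dart
   h, after giving every corner at the outer vertex v_i the label i. Since
   the four jumps go once around the labels, S(h) is a multiple of d; its
   first jump, between consecutive corners of a face, is nonzero (by L2 in an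
   inner face, by the labels 1, ..., d in the outer face), so S(h) >= d.
   Summed over all darts, every face jump and every vertex jump is counted
   twice: each inner face and each inner vertex contributes d (L1), the at
   least d outer vertices contribute nothing and the outer face at most
   d(d-1). Euler's formula then bounds the total by d |D|, so S(h) = d for
   every dart. *)

Lemma jumpE d x y : 0 < x <= d -> 0 < y <= d ->
  jump d x y = if x <= y then y - x else y + d - x.
Proof.
move=> /andP[x0 xd] /andP[y0 yd]; rewrite /jump; case: leqP => xy.
  by rewrite -addnBAC // modnDr modn_small //; lia.
by rewrite modn_small //; lia.
Qed.

Lemma jump_ltn d x y : 0 < d -> jump d x y < d.
Proof. exact: ltn_pmod. Qed.

Lemma jumpnn d x : jump d x x = 0.
Proof. by rewrite /jump addKn modnn. Qed.

Lemma jump_gt0 d x y : 0 < x <= d -> 0 < y <= d -> x != y -> 0 < jump d x y.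
Proof. by move=> x_range y_range; rewrite jumpE //; case: (leqP x y); lia. Qed.

Lemma jump_cycle4_ge d a b c e :
    0 < a <= d -> 0 < b <= d -> 0 < c <= d -> 0 < e <= d ->
  0 < jump d a b + jump d b c + jump d c e + jump d e a ->
  d <= jump d a b + jump d b c + jump d c e + jump d e a.
Proof.
move=> a_range b_range c_range e_range; rewrite !jumpE //.
by case: (leqP a b); case: (leqP b c); case: (leqP c e); case: (leqP e a); lia.
Qed.

Lemma sum_ge_const_eq (T : finType) (F : T -> nat) c :
  (forall i, c <= F i) -> \sum_i F i <= #|T| * c -> forall i, F i = c.
Proof.
move=> F_ge sumF_le i; apply/esym/eqP.
have /leqifP := leqif_sum (fun i (_ : true) => leqif_eq (F_ge i)).
rewrite sum_nat_const ltnNge sumF_le /=.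
by case: ifP => // /forall_inP/(_ i isT).
Qed.

Lemma sum_fclosed_orbits (T : finType) (f : T -> T) (a : {pred T}) (F : T -> nat) c :
    injective f -> fclosed f a ->
    (forall x, x \in a -> \sum_(g | fconnect f x g) F g = c) ->
  \sum_(g in a) F g = fcard f a * c.
Proof.
move=> f_inj a_closed orbit_sum; have f_sym := fconnect_sym f_inj.
rewrite (partition_big (froot f) [pred x in a | froots f x]) => [|g ag]; last first.
  by rewrite /= (roots_root f_sym) andbT -(closed_connect a_closed (connect_root _ g)).
rewrite /n_comp_mem -sum_nat_const; apply: eq_big => [x|x /andP[ax /eqP x_root]].
  by rewrite !inE andbC.
rewrite -(orbit_sum x ax); apply: eq_bigl => g.
rewrite -{1}x_root root_connect // f_sym.
case xg: (fconnect f x g); last by rewrite andbF.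
by rewrite -(closed_connect a_closed xg) ax.
Qed.

Lemma euler_jump_bound d n F Fi Vi Vo :
    0 < d -> d <= Vo -> Vo + Vi + (1 + Fi) = n %/ 2 + 2 ->
  F <= d * d.-1 + Fi * d -> 2 * (F + Vi * d) <= n * d.
Proof.
move=> d_gt0 Vo_ge euler F_le.
have count : Fi + Vi + d <= n %/ 2 + 1 by lia.
have := leq_mul2r d (Fi + Vi + d) (n %/ 2 + 1); rewrite count orbT => count_d.
have := leq_mul2r d (n %/ 2 * 2) n; rewrite leq_divM orbT => half_d.
nia.
Qed.

Section GSLabeling.

Variables (D : finType) (alpha sigma : D -> D) (r : D) (d : nat) (L : D -> nat).
Local Notation fp := (fphi alpha sigma).
Local Notation fp_inv := (fphi_inv alpha sigma).
Local Notation outer := (outer_corner alpha sigma r).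

Hypothesis d_gt1 : 1 < d.
Hypothesis sigma_inj : injective sigma.
Hypothesis alphaK : involutive alpha.
Hypothesis euler : fcard sigma D + fcard fp D = #|D| %/ 2 + 2.
Hypothesis outer_deg : order fp r = d.
Hypothesis outer_vertices_distinct :
  forall i j, i < j < d -> ~~ fconnect sigma (iter i fp r) (iter j fp r).
Hypothesis L_range : forall h, ~~ outer h -> 0 < L h <= d.
Hypothesis L_outer_vertex : forall h k, ~~ outer h -> k < d ->
  fconnect sigma (iter k fp r) h -> L h = k.+1.
Hypothesis L_inner_vertex : forall v, (forall g, fconnect sigma v g -> ~~ outer g) ->
  \sum_(g | fconnect sigma v g) jump d (L g) (L (finv sigma g)) = d.
Hypothesis L_inner_face : forall h, ~~ outer h ->
  \sum_(g | fconnect fp h g) jump d (L g) (L (fp_inv g)) = d.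
Hypothesis L_face_neq : forall g, ~~ outer g -> L g != L (fp_inv g).

Lemma fphi_inj : injective fp.
Proof. by move=> x y /(finv_inj sigma_inj)/(inv_inj alphaK). Qed.

Lemma fphiK : cancel fp fp_inv.
Proof. by move=> g; rewrite /fphi /fphi_inv f_finv. Qed.

Lemma fphi_invK : cancel fp_inv fp.
Proof. by move=> g; rewrite /fphi /fphi_inv alphaK finv_f. Qed.

Lemma outer_cornerP g : outer g -> exists2 k, k < d & g = iter k fp r.
Proof.
move=> rg; exists (findex fp r g); first by rewrite -outer_deg findex_max.
by rewrite iter_findex.
Qed.

Lemma outer_closed : fclosed fp outer.
Proof. exact: (connect_closed (fconnect_sym fphi_inj)). Qed.

Lemma outer_fphi_inv g : outer (fp_inv g) = outer g.
Proof. by rewrite -[in RHS](fphi_invK g); apply: (fclosed1 outer_closed). Qed.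

Definition outer_vertex (g : D) : bool :=
  has (fun k => fconnect sigma (iter k fp r) g) (iota 0 d).

Lemma outer_vertexP g :
  reflect (exists2 k, k < d & fconnect sigma (iter k fp r) g) (outer_vertex g).
Proof.
apply: (iffP hasP) => [[k] | [k kd kg]].
  by rewrite mem_iota => /andP[_ kd] kg; exists k.
by exists k; rewrite // mem_iota.
Qed.

Lemma outer_vertex_closed : fclosed sigma outer_vertex.
Proof.
by move=> g _ /eqP <-; apply: eq_has => k; rewrite /= -same_fconnect1_r.
Qed.

Lemma outer_vertex_outer g : outer g -> outer_vertex g.
Proof. by case/outer_cornerP => k kd ->; apply/outer_vertexP; exists k. Qed.

Definition corner_label (g : D) : nat :=
  if outer_vertex g
  then (find (fun k => fconnect sigma (iter k fp r) g) (iota 0 d)).+1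
  else L g.

Lemma corner_label_outer k g :
  k < d -> fconnect sigma (iter k fp r) g -> corner_label g = k.+1.
Proof.
move=> kd kg; have og : outer_vertex g by apply/outer_vertexP; exists k.
rewrite /corner_label og; set j := find _ _.
have jd : j < d by rewrite -[d in _ < d](size_iota 0) -has_find.
have := nth_find 0 og; rewrite -/j nth_iota // add0n => jg.
case: (ltngtP j k) => [jk | kj | -> //].
  have := @outer_vertices_distinct j k; rewrite jk kd => /(_ isT).
  by rewrite (connect_trans jg) // fconnect_sym.
by have := before_find 0 kj; rewrite nth_iota // add0n kg.
Qed.

Lemma corner_label_inner g : ~~ outer g -> corner_label g = L g.
Proof.
move=> ig; case og: (outer_vertex g); last by rewrite /corner_label og.
case/outer_vertexP: og => k kd kg.
by rewrite (corner_label_outer kd kg) (L_outer_vertex ig kd kg).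
Qed.

Lemma corner_label_range g : 0 < corner_label g <= d.
Proof.
case og: (outer_vertex g).
  by case/outer_vertexP: og => k kd /(corner_label_outer kd) ->.
rewrite /corner_label og; apply: L_range.
by apply: contraFN og; apply: outer_vertex_outer.
Qed.

Lemma corner_label_finv g :
  outer_vertex g -> corner_label (finv sigma g) = corner_label g.
Proof.
case/outer_vertexP => k kd kg; rewrite (corner_label_outer kd kg).
by apply: corner_label_outer kd _; apply: connect_trans kg (fconnect_finv _ _).
Qed.

Definition face_jump (g : D) : nat :=
  jump d (corner_label g) (corner_label (fp_inv g)).
Definition vertex_jump (g : D) : nat :=
  jump d (corner_label g) (corner_label (finv sigma g)).

Lemma face_jump_gt0 g : 0 < face_jump g.
Proof.
rewrite -(fphi_invK g) /face_jump fphiK; set h := fp_inv g.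
apply: jump_gt0; rewrite ?corner_label_range //.
case oh: (outer h); last first.
  have ifh : ~~ outer (fp h) by rewrite -outer_fphi_inv fphiK oh.
  by rewrite !corner_label_inner ?oh //; have := L_face_neq ifh; rewrite fphiK.
case/outer_cornerP: oh => k kd ->; rewrite -iterS (corner_label_outer kd (connect0 _ _)).
have [kd'|] := ltnP k.+1 d; first by rewrite (corner_label_outer kd' (connect0 _ _)); lia.
move=> dk; have -> : k.+1 = d by lia.
rewrite -{1}outer_deg (iter_order fphi_inj).
by rewrite (corner_label_outer (ltnW d_gt1) (connect0 _ _)) neq_ltn d_gt1.
Qed.

Lemma sum_vertex_jump : \sum_g vertex_jump g = fcard sigma [predC outer_vertex] * d.
Proof.
rewrite (bigID outer_vertex) /= big1 ?add0n => [|g og]; last first.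
  by rewrite /vertex_jump corner_label_finv // jumpnn.
apply: (sum_fclosed_orbits sigma_inj (predC_closed outer_vertex_closed)) => v iv.
have inner_at g : fconnect sigma v g -> ~~ outer g.
  move=> vg; apply: contra iv => /outer_vertex_outer.
  by rewrite (closed_connect outer_vertex_closed vg).
rewrite -(L_inner_vertex inner_at); apply: eq_bigr => g vg.
have vg' := connect_trans vg (fconnect_finv _ g).
by rewrite /vertex_jump !corner_label_inner ?inner_at.
Qed.

Lemma sum_face_jump_le :
  \sum_g face_jump g <= d * d.-1 + fcard fp [predC outer] * d.
Proof.
rewrite (bigID outer) /=; apply: leq_add.
  apply: (@leq_trans (\sum_(g | outer g) d.-1)).
    by apply: leq_sum => g _; rewrite -ltnS prednK ?jump_ltn // ltnW.
  rewrite sum_nat_cond_const.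
  have -> : #|[set g | outer g]| = d by rewrite cardsE -outer_deg; apply: eq_card.
  by rewrite mulnC.
apply/eq_leq/(sum_fclosed_orbits fphi_inj (predC_closed outer_closed)) => x ix.
rewrite -(L_inner_face ix); apply: eq_bigr => g xg.
have ig : g \in [predC outer] by rewrite -(closed_connect (predC_closed outer_closed) xg).
by rewrite /face_jump !corner_label_inner ?outer_fphi_inv.
Qed.

Lemma outer_vertex_count : d <= fcard sigma outer_vertex.
Proof.
pose vertex_of (k : 'I_d) := froot sigma (iter k fp r).
have vertex_of_inj : injective vertex_of.
  move=> i j /eqP; rewrite /vertex_of root_connect; last exact: fconnect_sym.
  move=> ij; apply: val_inj; case: (ltngtP i j) => // [lt_ij | lt_ji].
    by have := @outer_vertices_distinct i j; rewrite lt_ij (ltn_ord j) ij => /(_ isT).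
  have := @outer_vertices_distinct j i.
  by rewrite lt_ji (ltn_ord i) (fconnect_sym sigma_inj) ij => /(_ isT).
rewrite -{1}(card_ord d) -(card_imset _ vertex_of_inj); apply: subset_leq_card.
apply/subsetP => _ /imsetP[k _ ->].
rewrite !inE roots_root ?andbT; last exact: fconnect_sym.
by apply/outer_vertexP; exists k => //; apply: connect_root.
Qed.

Definition edge_jumps (h : D) : nat :=
  jump d (corner_label (fp h)) (corner_label h)
  + jump d (corner_label h) (corner_label (finv sigma h))
  + jump d (corner_label (finv sigma h)) (corner_label (alpha h))
  + jump d (corner_label (alpha h)) (corner_label (fp h)).

Lemma edge_jumps_ge h : d <= edge_jumps h.
Proof.
have := face_jump_gt0 (fp h); rewrite /face_jump fphiK => first_jump_gt0.
by apply: jump_cycle4_ge; rewrite ?corner_label_range //; lia.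
Qed.

Lemma sum_edge_jumps :
  \sum_h edge_jumps h = 2 * (\sum_g face_jump g + \sum_g vertex_jump g).
Proof.
have face1 : \sum_h jump d (corner_label (fp h)) (corner_label h) = \sum_g face_jump g.
  by rewrite [RHS](reindex_inj fphi_inj); apply: eq_bigr => h _; rewrite /face_jump fphiK.
have vertex1 : \sum_h jump d (corner_label h) (corner_label (finv sigma h))
             = \sum_g vertex_jump g by [].
have face2 : \sum_h jump d (corner_label (finv sigma h)) (corner_label (alpha h))
           = \sum_g face_jump g.
  rewrite [RHS](reindex_inj (finv_inj sigma_inj)); apply: eq_bigr => h _.
  by rewrite /face_jump /fphi_inv f_finv.
have vertex2 : \sum_h jump d (corner_label (alpha h)) (corner_label (fp h))
             = \sum_g vertex_jump g by rewrite [RHS](reindex_inj (inv_inj alphaK)).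
by rewrite /edge_jumps !big_split /= face1 vertex1 face2 vertex2; lia.
Qed.

Lemma sum_edge_jumps_le : \sum_h edge_jumps h <= #|D| * d.
Proof.
have := euler; rewrite (n_compC outer_vertex) (n_compC outer).
rewrite (n_comp_connect (fconnect_sym fphi_inj) r) => card_eq.
rewrite sum_edge_jumps sum_vertex_jump.
exact: euler_jump_bound (ltnW d_gt1) outer_vertex_count card_eq sum_face_jump_le.
Qed.

Lemma edge_jumps_eq h : edge_jumps h = d.
Proof. exact: (sum_ge_const_eq edge_jumps_ge sum_edge_jumps_le). Qed.

Lemma inner_edge_jumps h : inner_edge alpha sigma r h ->
  jump d (L (fp h)) (L h) + jump d (L h) (L (finv sigma h))
  + jump d (L (finv sigma h)) (L (alpha h)) + jump d (L (alpha h)) (L (fp h)) = d.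
Proof.
case/andP=> ih iah; have ifh : ~~ outer (fp h) by rewrite -outer_fphi_inv fphiK.
have ish : ~~ outer (finv sigma h) by rewrite -outer_fphi_inv /fphi_inv f_finv.
by have := edge_jumps_eq h; rewrite /edge_jumps !corner_label_inner.
Qed.

End GSLabeling.

Theorem mainTheorem11 (d : nat) (D : finType) (alpha sigma : D -> D) (r : D)
    (L : D -> nat) :
  3 <= d ->
  is_d_map alpha sigma r d ->
  is_GS_labeling alpha sigma r d L ->
  forall h, inner_edge alpha sigma r h ->
    jump d (L (fphi alpha sigma h)) (L h)
    + jump d (L h) (L (finv sigma h))
    + jump d (L (finv sigma h)) (L (alpha h))
    + jump d (L (alpha h)) (L (fphi alpha sigma h)) = d.
Proof.
move=> d_ge3 [[sigma_inj alphaK _ _ euler] outer_deg outer_distinct _].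
case=> [L_range [L_outer_vertex [L_inner_vertex [L_inner_face [L_face_neq _]]]]].
exact: (inner_edge_jumps (ltnW d_ge3) sigma_inj alphaK euler outer_deg outer_distinct
          L_range L_outer_vertex L_inner_vertex L_inner_face L_face_neq).
Qed.
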